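(* Let $1<p,q<\infty$, $r>1$, and $X=\bigoplus_{\ell_p}\ell_q^n$. Let $F:X\to\mathbb{R}$ be uniformly $H^r$-smooth. For each $n$ let $F_n=F\circ i_n\circ\pi_n:\ell_q\to\mathbb{R}$. Then there is a subsequence $(F_{n_j})_j$ of $(F_n)_n$ which converges pointwise on $\ell_q$ to a uniformly $H^r$-smooth function $F^*:\ell_q\to\mathbb{R}$.
   Context: $\bigoplus_{\ell_p}\ell_q^n$ is the space of sequences $x=(x_n)_{n\ge1}$ with $x_n\in\ell_q^n$ and $\|x\|=(\sum_n\|x_n\|_q^p)^{1/p}<\infty$. $\pi_n:\ell_q\to\ell_q^n$ is the projection onto the first $n$ coordinates, and $i_n:\ell_q^n\to X$ is the isometric inclusion of $\ell_q^n$ as the $n$-th summand of $X$. For real $s>1$, with $k$ the largest integer strictly less than $s$, $g$ is uniformly $H^s$-smooth if it is $C^k$ and there is $M>0$ with $\|g^{(k)}(y)-g^{(k)}(z)\|\le M\|y-z\|^{s-k}$ for all $y,z$. *)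

From Stdlib Require Import Reals.
From Coquelicot Require Import Coquelicot.
Open Scope R_scope.

(* Power with real exponent, with the convention 0^a = 0 (used only for a > 0). *)
Definition pw (x a : R) : R := if Rlt_dec 0 x then Rpower x a else 0.

Fixpoint sumR (n : nat) (f : nat -> R) : R :=
  match n with O => 0 | S m => sumR m f + f m end.
Fixpoint prodR (n : nat) (f : nat -> R) : R :=
  match n with O => 1 | S m => prodR m f * f m end.

Definition scons {V : Type} (h : V) (hs : nat -> V) : nat -> V :=
  fun i => match i with O => h | S i' => hs i' end.
Definition supd {V : Type} (hs : nat -> V) (i : nat) (v : V) : nat -> V :=
  fun m => if Nat.eqb m i then v else hs m.

(* Generic uniform H^s-smoothness of a real function on a real normed
   space, presented concretely as a subset [mem] of an ambient type [V]
   closed under [add] and [scal], with norm [nrm].                      *)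
Section Smooth.
Variables (V : Type) (mem : V -> Prop) (add : V -> V -> V)
          (scal : R -> V -> V) (nrm : V -> R).

Definition args_in (j : nat) (hs : nat -> V) : Prop :=
  forall i, (i < j)%nat -> mem (hs i).

(* T (applied to the first j arguments of hs) is a bounded j-linear form *)
Definition bounded_multilinear (j : nat) (T : (nat -> V) -> R) : Prop :=
  (forall hs hs', (forall i, (i < j)%nat -> hs i = hs' i) -> T hs = T hs') /\
  (forall hs i u v, args_in j hs -> (i < j)%nat -> mem u -> mem v ->
      T (supd hs i (add u v)) = T (supd hs i u) + T (supd hs i v)) /\
  (forall hs i (a : R) u, args_in j hs -> (i < j)%nat -> mem u ->
      T (supd hs i (scal a u)) = a * T (supd hs i u)) /\
  (exists C : R, forall hs, args_in j hs ->
      Rabs (T hs) <= C * prodR j (fun i => nrm (hs i))).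

(* D is a family of successive Frechet derivatives of g up to order k:
   D 0 = g, each D j x is a bounded j-linear form, and for j < k,
   D (j+1) x is the Frechet derivative of D j at x (in operator norm):
   D (j+1) x (h, h_1, ..., h_j) is the derivative in direction h. *)
Definition frechet_derivatives (k : nat) (g : V -> R)
    (D : nat -> V -> (nat -> V) -> R) : Prop :=
  (forall x hs, mem x -> D O x hs = g x) /\
  (forall j x, (j <= k)%nat -> mem x -> bounded_multilinear j (D j x)) /\
  (forall j x, (j < k)%nat -> mem x ->
     forall eps : R, 0 < eps -> exists delta : R, 0 < delta /\
       forall h, mem h -> nrm h < delta -> forall hs, args_in j hs ->
         Rabs (D j (add x h) hs - D j x hs - D (S j) x (scons h hs))
           <= eps * nrm h * prodR j (fun i => nrm (hs i))).

(* g is uniformly H^s-smooth: with k the largest integer strictly less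
   than s, g is C^k and its k-th derivative is (s-k)-Holder:
   || D^k g(y) - D^k g(z) || <= M || y - z ||^(s-k)  (operator norm,
   written out as an inequality for all arguments).  The Holder bound
   implies the continuity of D^k g, so g is indeed C^k. *)
Definition unif_Hs_smooth (s : R) (g : V -> R) : Prop :=
  exists (k : nat) (D : nat -> V -> (nat -> V) -> R) (M : R),
    INR k < s <= INR (S k) /\
    frechet_derivatives k g D /\
    0 < M /\
    (forall y z hs, mem y -> mem z -> args_in k hs ->
       Rabs (D k y hs - D k z hs)
         <= M * pw (nrm (add y (scal (-1) z))) (s - INR k)
              * prodR k (fun i => nrm (hs i))).
End Smooth.

Definition lq_mem (q : R) (x : nat -> R) : Prop :=
  ex_series (fun i => pw (Rabs (x i)) q).
Definition lq_norm (q : R) (x : nat -> R) : R :=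
  pw (Series (fun i => pw (Rabs (x i)) q)) (1 / q).
Definition seq_add (x y : nat -> R) : nat -> R := fun i => x i + y i.
Definition seq_scal (a : R) (x : nat -> R) : nat -> R := fun i => a * x i.

(* An element is x : nat -> nat -> R,
   where x n is the n-th block, an element of l_q^n, i.e. only the
   coordinates x n 0, ..., x n (n-1) may be nonzero (block 0 is the
   zero-dimensional space, so effectively blocks are indexed by n >= 1). *)
Definition lqn_norm (q : R) (n : nat) (v : nat -> R) : R :=
  pw (sumR n (fun i => pw (Rabs (v i)) q)) (1 / q).
Definition X_mem (p q : R) (x : nat -> nat -> R) : Prop :=
  (forall n i, (n <= i)%nat -> x n i = 0) /\
  ex_series (fun n => pw (lqn_norm q n (x n)) p).
Definition X_norm (p q : R) (x : nat -> nat -> R) : R :=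
  pw (Series (fun n => pw (lqn_norm q n (x n)) p)) (1 / p).
Definition X_add (x y : nat -> nat -> R) : nat -> nat -> R :=
  fun n i => x n i + y n i.
Definition X_scal (a : R) (x : nat -> nat -> R) : nat -> nat -> R :=
  fun n i => a * x n i.

(* i_n (pi_n x): the first n coordinates of x put in the n-th block. *)
Definition in_pin (n : nat) (x : nat -> R) : nat -> nat -> R :=
  fun m i => if andb (Nat.eqb m n) (Nat.ltb i n) then x i else 0.

Definition smooth_X (p q r : R) (F : (nat -> nat -> R) -> R) : Prop :=
  unif_Hs_smooth (nat -> nat -> R) (X_mem p q) X_add X_scal (X_norm p q) r F.
Definition smooth_lq (q r : R) (G : (nat -> R) -> R) : Prop :=
  unif_Hs_smooth (nat -> R) (lq_mem q) seq_add seq_scal (lq_norm q) r G.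

(** The maps [x |-> i_n (pi_n x)] have norm one, so the derivatives
    [D^j F_n x] of the functions [F_n] are bounded on bounded sets, equicontinuous
    and uniformly Frechet-differentiable there, all uniformly in [n]: the
    Holder bound on [D^k F] propagates down to the lower derivatives by the mean
    value theorem.  A Cantor diagonal argument gives a subsequence along which
    [F_n] converges on a countable dense subset of [l_q] (finitely supported
    rational sequences), and equicontinuity extends the convergence to all of
    [l_q].  Writing [D^(j+1) F_n x (h, hs)] as a difference quotient of
    [D^j F_n] up to a remainder that is uniformly small, the derivatives of
    every order [j <= k] converge as well; the limits [D^j F^*] inherit
    multilinearity, the bounds, the Frechet property and the Holder estimate. *)

From Stdlib Require Import Reals.
From Coquelicot Require Import Coquelicot.
From Stdlib Require Import Lra Lia ZArith Cantor FunctionalExtensionality IndefiniteDescription.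
Open Scope R_scope.

Lemma pw_ge0 x a : 0 <= pw x a.
Proof. unfold pw; destruct Rlt_dec; [left; apply exp_pos | lra]. Qed.

Lemma pw_Rpower x a : 0 < x -> pw x a = Rpower x a.
Proof. intros Hx; unfold pw; destruct Rlt_dec; [reflexivity | lra]. Qed.

Lemma pw_0 a : pw 0 a = 0.
Proof. unfold pw; destruct Rlt_dec; [lra | reflexivity]. Qed.

Lemma pw_gt0 x a : 0 < x -> 0 < pw x a.
Proof. intros Hx; rewrite pw_Rpower by exact Hx; apply exp_pos. Qed.

Lemma pw_le_compat x y a : 0 < a -> 0 <= x <= y -> pw x a <= pw y a.
Proof.
  intros Ha [[Hx | <-] Hxy].
  - rewrite !pw_Rpower by lra; apply Rle_Rpower_l; lra.
  - rewrite pw_0; apply pw_ge0.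
Qed.

Lemma pw_mult x y a : 0 <= x -> 0 <= y -> pw (x * y) a = pw x a * pw y a.
Proof.
  intros [Hx | <-] [Hy | <-]; try (rewrite ?Rmult_0_l, ?Rmult_0_r, !pw_0; ring).
  rewrite !pw_Rpower by nra; symmetry; apply Rpower_mult_distr; lra.
Qed.

Lemma pw_pw x a b : 0 <= x -> pw (pw x a) b = pw x (a * b).
Proof.
  intros [Hx | <-]; [| rewrite !pw_0; reflexivity].
  rewrite (pw_Rpower x) by exact Hx; rewrite pw_Rpower by apply exp_pos.
  rewrite pw_Rpower by exact Hx; apply Rpower_mult.
Qed.

Lemma pw_1 x : 0 <= x -> pw x 1 = x.
Proof. intros [Hx | <-]; [rewrite pw_Rpower by exact Hx; apply Rpower_1, Hx | apply pw_0]. Qed.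

Lemma pw_pw_inv x a : 0 <= x -> a <> 0 -> pw (pw x a) (1 / a) = x.
Proof.
  intros Hx Ha; rewrite pw_pw by exact Hx.
  replace (a * (1 / a)) with 1 by (field; exact Ha); apply pw_1, Hx.
Qed.

Lemma pw_inv_pw x a : 0 <= x -> a <> 0 -> pw (pw x (1 / a)) a = x.
Proof.
  intros Hx Ha; rewrite pw_pw by exact Hx.
  replace (1 / a * a) with 1 by (field; exact Ha); apply pw_1, Hx.
Qed.

Lemma pw_le_base x a : 0 <= x <= 1 -> 1 <= a -> pw x a <= x.
Proof.
  intros [[Hx | <-] Hx1] Ha; [| rewrite pw_0; lra].
  rewrite pw_Rpower by exact Hx; unfold Rpower.
  assert (Hln : ln x <= 0) by (rewrite <- ln_1; apply ln_le; lra).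
  rewrite <- (exp_ln x) at 2 by exact Hx.
  destruct (Req_dec (a * ln x) (ln x)) as [-> | Hne]; [lra | left; apply exp_increasing; nra].
Qed.

Lemma pw_Rabs_add_le q u v :
  0 < q -> pw (Rabs (u + v)) q <= pw 2 q * (pw (Rabs u) q + pw (Rabs v) q).
Proof.
  intros Hq; set (m := Rmax (Rabs u) (Rabs v)).
  assert (Hm : 0 <= m) by (apply Rle_trans with (Rabs u); [apply Rabs_pos | apply Rmax_l]).
  assert (Huv : Rabs (u + v) <= 2 * m).
  { pose proof (Rabs_triang u v); pose proof (Rmax_l (Rabs u) (Rabs v));
      pose proof (Rmax_r (Rabs u) (Rabs v)); unfold m; lra. }
  apply Rle_trans with (pw (2 * m) q); [apply pw_le_compat; auto; split; [apply Rabs_pos | exact Huv] |].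
  rewrite pw_mult by lra; apply Rmult_le_compat_l; [apply pw_ge0 |].
  pose proof (pw_ge0 (Rabs u) q); pose proof (pw_ge0 (Rabs v) q).
  unfold m; destruct (Rle_dec (Rabs u) (Rabs v)); [rewrite Rmax_right | rewrite Rmax_left]; lra.
Qed.

(* Reduce by homogeneity to [a + b = 1] and apply [pw_le_base] to both terms. *)
Lemma pw_add_ge a b q : 0 <= a -> 0 <= b -> 1 <= q -> pw a q + pw b q <= pw (a + b) q.
Proof.
  intros Ha Hb Hq; destruct (Req_dec (a + b) 0) as [H0 | H0].
  { replace a with 0 by lra; replace b with 0 by lra; rewrite Rplus_0_r, !pw_0; lra. }
  set (s := a + b); assert (Hs : 0 < s) by (unfold s; lra).
  assert (Hfrac : forall c, 0 <= c <= s -> 0 <= c / s <= 1).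
  { intros c Hc; split; [apply Rdiv_le_0_compat; lra |].
    apply Rmult_le_reg_r with s; [exact Hs |]; unfold Rdiv; rewrite Rmult_assoc, Rinv_l; lra. }
  replace a with (a / s * s) at 1 by (field; lra); replace b with (b / s * s) at 1 by (field; lra).
  rewrite !pw_mult by (try apply Hfrac; unfold s; lra).
  pose proof (pw_le_base (a / s) q (Hfrac a ltac:(unfold s; lra)) Hq).
  pose proof (pw_le_base (b / s) q (Hfrac b ltac:(unfold s; lra)) Hq).
  assert (a / s + b / s = 1) by (unfold s; field; lra).
  pose proof (pw_ge0 s q); nra.
Qed.

Lemma sumR_ge0 n f : (forall i, (i < n)%nat -> 0 <= f i) -> 0 <= sumR n f.
Proof.
  induction n as [| n IH]; simpl; intros H; [lra |].
  pose proof (H n ltac:(lia)); pose proof (IH ltac:(intros; apply H; lia)); lra.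
Qed.

Lemma sumR_le_compat n f g : (forall i, (i < n)%nat -> f i <= g i) -> sumR n f <= sumR n g.
Proof.
  induction n as [| n IH]; simpl; intros H; [lra |].
  pose proof (H n ltac:(lia)); pose proof (IH ltac:(intros; apply H; lia)); lra.
Qed.

Lemma sumR_ext n f g : (forall i, (i < n)%nat -> f i = g i) -> sumR n f = sumR n g.
Proof. induction n; simpl; intros H; [reflexivity |]; rewrite IHn, H; auto; intros; apply H; lia. Qed.

Lemma sumR_scal n c f : sumR n (fun i => c * f i) = c * sumR n f.
Proof. induction n; simpl; [ring |]; rewrite IHn; ring. Qed.

Lemma sumR_plus n f g : sumR n (fun i => f i + g i) = sumR n f + sumR n g.
Proof. induction n; simpl; [ring |]; rewrite IHn; ring. Qed.

Lemma sumR_const n c : sumR n (fun _ => c) = INR n * c.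
Proof. induction n; simpl sumR; [simpl; ring |]; rewrite IHn, S_INR; ring. Qed.

Lemma sumR_le_sumR m n f : (forall i, 0 <= f i) -> (m <= n)%nat -> sumR m f <= sumR n f.
Proof. intros Hf Hmn; induction Hmn; simpl; [lra | specialize (Hf m0); lra]. Qed.

Lemma sumR_sum_n n f : sumR (S n) f = sum_n f n.
Proof.
  induction n; [simpl; rewrite sum_O; ring |].
  rewrite sum_Sn; change (sumR (S n) f + f (S n) = plus (sum_n f n) (f (S n))).
  rewrite IHn; reflexivity.
Qed.

Lemma sumR_le_Series n w : (forall i, 0 <= w i) -> ex_series w -> sumR n w <= Series w.
Proof.
  intros Hw [l Hl]; rewrite (is_series_unique w l Hl).
  assert (Hle : Rbar_le (sumR (S n) w) l).
  { apply is_lim_seq_le_loc with (fun _ => sumR (S n) w) (sum_n w); [| apply is_lim_seq_const | exact Hl].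
    exists n; intros m Hm; rewrite <- sumR_sum_n; apply sumR_le_sumR; auto; lia. }
  simpl in Hle; pose proof (Hw n); lra.
Qed.

Lemma sumR_tail_le a eta : (forall i, 0 <= a i) -> ex_series a -> 0 < eta ->
  exists N, forall n, (N <= n)%nat -> sumR n a - sumR N a <= eta.
Proof.
  intros Ha [l Hl] He; change (is_lim_seq (sum_n a) l) in Hl; apply is_lim_seq_Reals in Hl.
  destruct (Hl (eta / 2) ltac:(lra)) as [N0 HN0]; exists (S N0); intros [| n] Hn; [lia |].
  rewrite !sumR_sum_n; pose proof (HN0 n ltac:(lia)); pose proof (HN0 N0 ltac:(lia)).
  unfold R_dist in *; apply Rabs_def2 in H; apply Rabs_def2 in H0; lra.
Qed.

Lemma prodR_ge0 n f : (forall i, (i < n)%nat -> 0 <= f i) -> 0 <= prodR n f.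
Proof. induction n; simpl; intros H; [lra |]; apply Rmult_le_pos; [apply IHn |]; intros; apply H; lia. Qed.

Lemma prodR_le_compat n f g : (forall i, (i < n)%nat -> 0 <= f i <= g i) -> prodR n f <= prodR n g.
Proof.
  induction n; simpl; intros H; [lra |].
  apply Rmult_le_compat; [apply prodR_ge0; intros; apply H; lia | apply H; lia
    | apply IHn; intros; apply H; lia | apply H; lia].
Qed.

Lemma prodR_ext n f g : (forall i, (i < n)%nat -> f i = g i) -> prodR n f = prodR n g.
Proof. induction n; simpl; intros H; [reflexivity |]; rewrite IHn, H; auto; intros; apply H; lia. Qed.

Lemma prodR_scons {V} (f : V -> R) n h hs :
  prodR (S n) (fun i => f (scons h hs i)) = f h * prodR n (fun i => f (hs i)).
Proof.
  induction n; [simpl; ring |].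
  change (prodR (S n) (fun i => f (scons h hs i)) * f (hs n)
    = f h * (prodR n (fun i => f (hs i)) * f (hs n))); rewrite IHn; ring.
Qed.

Definition seq0 : nat -> R := fun _ => 0.
Definition seq_sub (x y : nat -> R) : nat -> R := seq_add x (seq_scal (-1) y).

Section LqNorms.
Variable q : R.
Hypothesis Hq : 1 < q.

Lemma lqn_norm_ge0 n x : 0 <= lqn_norm q n x.
Proof. apply pw_ge0. Qed.

Lemma lq_norm_ge0 x : 0 <= lq_norm q x.
Proof. apply pw_ge0. Qed.

Lemma sumR_pw_ge0 n x : 0 <= sumR n (fun i => pw (Rabs (x i)) q).
Proof. apply sumR_ge0; intros; apply pw_ge0. Qed.

Lemma lqn_norm_pw n x : pw (lqn_norm q n x) q = sumR n (fun i => pw (Rabs (x i)) q).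
Proof. apply pw_inv_pw; [apply sumR_pw_ge0 | lra]. Qed.

Lemma lqn_norm_scal n s x : lqn_norm q n (seq_scal s x) = Rabs s * lqn_norm q n x.
Proof.
  unfold lqn_norm, seq_scal.
  rewrite (sumR_ext n _ (fun i => pw (Rabs s) q * pw (Rabs (x i)) q))
    by (intros; rewrite Rabs_mult, pw_mult; auto; apply Rabs_pos).
  rewrite sumR_scal, pw_mult, pw_pw_inv;
    [reflexivity | apply Rabs_pos | lra | apply pw_ge0 | apply sumR_pw_ge0].
Qed.

(* A quasi-triangle inequality is all the argument needs. *)
Lemma lqn_norm_add_le n x y :
  lqn_norm q n (seq_add x y) <= 2 * (lqn_norm q n x + lqn_norm q n y).
Proof.
  set (a := lqn_norm q n x); set (b := lqn_norm q n y).
  assert (Ha : 0 <= a) by apply lqn_norm_ge0; assert (Hb : 0 <= b) by apply lqn_norm_ge0.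
  unfold lqn_norm at 1; rewrite <- (pw_pw_inv (2 * (a + b)) q) by lra.
  apply pw_le_compat; [apply Rdiv_lt_0_compat; lra | split; [apply sumR_pw_ge0 |]].
  apply Rle_trans with (pw 2 q * (sumR n (fun i => pw (Rabs (x i)) q) + sumR n (fun i => pw (Rabs (y i)) q))).
  { rewrite <- sumR_plus, <- sumR_scal; apply sumR_le_compat; intros; apply pw_Rabs_add_le; lra. }
  rewrite pw_mult by lra; apply Rmult_le_compat_l; [apply pw_ge0 |].
  rewrite <- !lqn_norm_pw; apply pw_add_ge; lra.
Qed.

Lemma lqn_norm_le_lq_norm n x : lq_mem q x -> lqn_norm q n x <= lq_norm q x.
Proof.
  intros Hx; apply pw_le_compat; [apply Rdiv_lt_0_compat; lra |].
  split; [apply sumR_pw_ge0 | apply sumR_le_Series; [intros; apply pw_ge0 | exact Hx]].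
Qed.

Lemma lq_mem_add x y : lq_mem q x -> lq_mem q y -> lq_mem q (seq_add x y).
Proof.
  intros Hx Hy; unfold lq_mem, seq_add.
  apply (@ex_series_le R_AbsRing R_CompleteNormedModule _
    (fun i => pw 2 q * (pw (Rabs (x i)) q + pw (Rabs (y i)) q))).
  - intros n; change (Rabs (pw (Rabs (x n + y n)) q) <= pw 2 q * (pw (Rabs (x n)) q + pw (Rabs (y n)) q)).
    rewrite Rabs_pos_eq by apply pw_ge0; apply pw_Rabs_add_le; lra.
  - apply (@ex_series_scal_l R_AbsRing R_NormedModule),
      (@ex_series_plus R_AbsRing R_NormedModule); assumption.
Qed.

Lemma lq_mem_scal s x : lq_mem q x -> lq_mem q (seq_scal s x).
Proof.
  intros Hx; unfold lq_mem, seq_scal.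
  apply ex_series_ext with (fun i => pw (Rabs s) q * pw (Rabs (x i)) q).
  { intros n; rewrite Rabs_mult, pw_mult; auto; apply Rabs_pos. }
  apply (@ex_series_scal_l R_AbsRing R_NormedModule), Hx.
Qed.

Lemma lq_mem_sub x y : lq_mem q x -> lq_mem q y -> lq_mem q (seq_sub x y).
Proof. intros; apply lq_mem_add, lq_mem_scal; assumption. Qed.

End LqNorms.

Lemma in_pin_add n x y : in_pin n (seq_add x y) = X_add (in_pin n x) (in_pin n y).
Proof.
  unfold in_pin, X_add, seq_add; apply functional_extensionality; intro m.
  apply functional_extensionality; intro i; destruct (andb _ _); ring.
Qed.

Lemma in_pin_scal n a x : in_pin n (seq_scal a x) = X_scal a (in_pin n x).
Proof.
  unfold in_pin, X_scal, seq_scal; apply functional_extensionality; intro m.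
  apply functional_extensionality; intro i; destruct (andb _ _); ring.
Qed.

Lemma in_pin_seq0 n : in_pin n seq0 = fun _ _ => 0.
Proof.
  unfold in_pin, seq0; apply functional_extensionality; intro m.
  apply functional_extensionality; intro i; destruct (andb _ _); reflexivity.
Qed.

Lemma sumR_single n c m :
  sumR m (fun k => if Nat.eqb k n then c else 0) = if Nat.leb m n then 0 else c.
Proof.
  induction m as [| m IH]; [reflexivity |]; simpl sumR; rewrite IH.
  destruct (Nat.eqb_spec m n) as [-> | Hmn].
  - rewrite Nat.leb_refl, (proj2 (Nat.leb_gt (S n) n)) by lia; ring.
  - destruct (Nat.leb_spec m n), (Nat.leb_spec (S m) n); try lia; ring.
Qed.

Lemma is_series_single n c : is_series (fun k => if Nat.eqb k n then c else 0) c.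
Proof.
  change (is_lim_seq (sum_n (fun k => if Nat.eqb k n then c else 0)) c).
  apply (is_lim_seq_incr_n _ n), is_lim_seq_ext with (fun _ => c); [| apply is_lim_seq_const].
  intros k; rewrite <- sumR_sum_n, sumR_single, (proj2 (Nat.leb_gt (S (k + n)) n)) by lia.
  reflexivity.
Qed.

Lemma lqn_norm_in_pin q n x m :
  lqn_norm q m (in_pin n x m) = if Nat.eqb m n then lqn_norm q n x else 0.
Proof.
  unfold lqn_norm, in_pin; destruct (Nat.eqb_spec m n) as [-> | Hmn].
  - f_equal; apply sumR_ext; intros i Hi; simpl.
    rewrite (proj2 (Nat.ltb_lt i n) Hi); reflexivity.
  - rewrite (sumR_ext m _ (fun i => 0 * 0)), sumR_scal, Rmult_0_l, pw_0; [reflexivity |].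
    intros i _; simpl; rewrite Rabs_R0, pw_0; ring.
Qed.

Lemma is_series_X_norm_in_pin p q n x :
  is_series (fun m => pw (lqn_norm q m (in_pin n x m)) p) (pw (lqn_norm q n x) p).
Proof.
  apply is_series_ext with (fun m => if Nat.eqb m n then pw (lqn_norm q n x) p else 0);
    [| apply is_series_single].
  intros m; rewrite lqn_norm_in_pin; destruct (Nat.eqb m n); [reflexivity | symmetry; apply pw_0].
Qed.

Lemma X_mem_in_pin p q n x : X_mem p q (in_pin n x).
Proof.
  split; [| eexists; apply is_series_X_norm_in_pin].
  intros m i Hi; unfold in_pin; destruct (Nat.eqb_spec m n) as [-> | ]; [| reflexivity].
  rewrite (proj2 (Nat.ltb_ge i n) Hi); reflexivity.
Qed.

Lemma X_norm_in_pin p q n x : 0 < p -> X_norm p q (in_pin n x) = lqn_norm q n x.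
Proof.
  intros Hp; unfold X_norm; rewrite (is_series_unique _ _ (is_series_X_norm_in_pin p q n x)).
  apply pw_pw_inv; [apply lqn_norm_ge0 | lra].
Qed.

Definition strict_incr (s : nat -> nat) : Prop := forall n, (s n < s (S n))%nat.

Lemma strict_incr_lt s : strict_incr s -> forall m n, (m < n)%nat -> (s m < s n)%nat.
Proof. intros Hs m n Hmn; induction Hmn; [apply Hs | specialize (Hs m0); lia]. Qed.

Lemma strict_incr_le s : strict_incr s -> forall m n, (m <= n)%nat -> (s m <= s n)%nat.
Proof.
  intros Hs m n Hmn; destruct (Nat.eq_dec m n) as [-> | ]; [lia |].
  apply Nat.lt_le_incl, strict_incr_lt; auto; lia.
Qed.

Lemma strict_incr_ge_id s : strict_incr s -> forall n, (n <= s n)%nat.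
Proof. intros Hs n; induction n; [lia | specialize (Hs n); lia]. Qed.

Lemma strict_incr_comp s t : strict_incr s -> strict_incr t -> strict_incr (fun n => s (t n)).
Proof. intros Hs Ht n; apply strict_incr_lt; auto. Qed.

Lemma inv_INR_lt_eventually eps : 0 < eps -> exists N, forall n, (N <= n)%nat -> / INR (S n) < eps.
Proof.
  intros Heps; destruct (archimed_cor1 eps Heps) as [N [HN HN0]]; exists N; intros n Hn.
  apply Rle_lt_trans with (/ INR N); [| exact HN].
  apply Rinv_le_contravar; [apply lt_0_INR; exact HN0 | apply le_INR; lia].
Qed.

Lemma bounded_convergent_subseq (u : nat -> R) (B : R) : (forall n, Rabs (u n) <= B) ->
  exists s, strict_incr s /\ ex_finite_lim_seq (fun n => u (s n)).
Proof.
  intros HB; destruct (Bolzano_Weierstrass u (fun c => -B <= c <= B) (compact_P3 (-B) B)) as [l Hl].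
  { intros n; specialize (HB n); apply Rabs_le_between in HB; lra. }
  assert (Hnear : forall N m : nat, exists n, (N <= n)%nat /\ Rabs (u n - l) < / INR (S m)).
  { intros N m; assert (Hpos : 0 < / INR (S m)) by (apply Rinv_0_lt_compat, lt_0_INR; lia).
    destruct (Hl (fun y => Rabs (y - l) < / INR (S m)) N) as [n Hn]; [| exists n; exact Hn].
    exists (mkposreal _ Hpos); intros y Hy; exact Hy. }
  set (g := fun N m => proj1_sig (constructive_indefinite_description _ (Hnear N m))).
  assert (Hg : forall N m, (N <= g N m)%nat /\ Rabs (u (g N m) - l) < / INR (S m))
    by (intros N m; unfold g; destruct constructive_indefinite_description; assumption).
  set (s := fix s n := match n with O => g O O | S n' => g (S (s n')) (S n') end).
  assert (Hs : forall n, Rabs (u (s n) - l) < / INR (S n)) by (intros [| n]; apply Hg).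
  exists s; split; [intros n; simpl; pose proof (Hg (S (s n)) (S n)); lia |].
  exists l; apply is_lim_seq_Reals; intros eps Heps.
  destruct (inv_INR_lt_eventually eps Heps) as [N HN]; exists N; intros n Hn.
  apply Rlt_trans with (/ INR (S n)); [apply Hs | apply HN; lia].
Qed.

(* Cantor's diagonal argument: [Psi (S c)] is a subsequence of [Psi c] along
   which row [S c] converges, and [phi j := Psi j j]. *)
Lemma diagonal_convergent_subseq (a : nat -> nat -> R) :
  (forall c, exists B, forall n, Rabs (a c n) <= B) ->
  exists phi, strict_incr phi /\ forall c, ex_finite_lim_seq (fun j => a c (phi j)).
Proof.
  intros HB.
  assert (Hsel : forall (psi : nat -> nat) c,
    exists s, strict_incr s /\ ex_finite_lim_seq (fun n => a c (psi (s n)))).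
  { intros psi c; destruct (HB c) as [B HBc].
    apply (bounded_convergent_subseq (fun n => a c (psi n)) B); auto. }
  set (Sel := fun psi c => proj1_sig (constructive_indefinite_description _ (Hsel psi c))).
  assert (HSel : forall psi c, strict_incr (Sel psi c)
                   /\ ex_finite_lim_seq (fun n => a c (psi (Sel psi c n))))
    by (intros; unfold Sel; destruct constructive_indefinite_description; assumption).
  set (Psi := fix Psi c := match c with
                | O => Sel (fun n => n) O
                | S c' => fun n => Psi c' (Sel (Psi c') (S c') n) end).
  assert (Hinc : forall c, strict_incr (Psi c)).
  { induction c; simpl; [apply HSel | apply strict_incr_comp; [assumption | apply HSel]]. }
  assert (Hlim : forall c, ex_finite_lim_seq (fun n => a c (Psi c n)))
    by (intros [| c]; [apply (HSel (fun n => n) O) | apply HSel]).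
  assert (Hrange : forall c d n, exists m, (n <= m)%nat /\ Psi (d + c)%nat n = Psi c m).
  { intros c d; induction d as [| d IH]; intros n; [exists n; split; [lia | reflexivity] |].
    destruct (IH (Sel (Psi (d + c)%nat) (S (d + c)) n)) as [m [Hm E]].
    exists m; split; [| exact E].
    pose proof (strict_incr_ge_id _ (proj1 (HSel (Psi (d + c)%nat) (S (d + c)))) n); lia. }
  exists (fun j => Psi j j); split.
  - intros j; simpl; apply Nat.lt_le_trans with (Psi j (S j)); [apply Hinc |].
    apply strict_incr_le; [apply Hinc | apply strict_incr_ge_id, HSel].
  - intros c; destruct (Hlim c) as [l Hl]; exists l.
    apply is_lim_seq_Reals in Hl; apply is_lim_seq_Reals; intros eps Heps.
    destruct (Hl eps Heps) as [N HN]; exists (max N c); intros j Hj.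
    destruct (Hrange c (j - c)%nat j) as [m [Hm E]].
    replace (j - c + c)%nat with j in E by lia; rewrite E; apply HN; lia.
Qed.

(* [decode c] is the stream of naturals coded by [c] through iterated Cantor
   pairing. *)
Fixpoint decode (c i : nat) : nat :=
  match i with
  | O => fst (Cantor.of_nat c)
  | S i' => decode (snd (Cantor.of_nat c)) i'
  end.

Lemma decode_prefix_surj L : forall v : nat -> nat, exists c, forall i, (i < L)%nat -> decode c i = v i.
Proof.
  induction L as [| L IH]; intros v; [exists O; intros; lia |].
  destruct (IH (fun i => v (S i))) as [c' Hc']; exists (Cantor.to_nat (v O, c')).
  intros [| i] Hi; cbn [decode]; rewrite Cantor.cancel_of_to; [reflexivity | apply Hc'; lia].
Qed.

(* The [c]-th finitely supported rational sequence: the stream [decode c]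
   gives its support length, its denominator and, via the pairs [(a, b)],
   the numerators [a - b]. *)
Definition rat_seq (c : nat) : nat -> R := fun i =>
  if Nat.ltb i (decode c 0) then
    (INR (fst (Cantor.of_nat (decode c (S (S i)))))
       - INR (snd (Cantor.of_nat (decode c (S (S i)))))) / INR (S (decode c 1))
  else 0.

Lemma INR_Z_to_nat_sub z : INR (Z.to_nat z) - INR (Z.to_nat (- z)) = IZR z.
Proof. destruct z; simpl; [ring | rewrite INR_IPR; unfold IZR; ring | rewrite INR_IPR; unfold IZR; ring]. Qed.

Lemma rat_seq_support c i : (decode c 0 <= i)%nat -> rat_seq c i = 0.
Proof. intros Hi; unfold rat_seq; rewrite (proj2 (Nat.ltb_ge _ _) Hi); reflexivity. Qed.

Lemma rat_seq_approx (x : nat -> R) N K : (0 < K)%nat ->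
  exists c, (forall i, (i < N)%nat -> Rabs (rat_seq c i - x i) <= / INR K)
         /\ (forall i, (N <= i)%nat -> rat_seq c i = 0).
Proof.
  intros HK; set (z := fun i => up (x i * INR K)).
  set (v := fun j => match j with
                     | O => N | S O => pred K
                     | S (S i) => Cantor.to_nat (Z.to_nat (z i), Z.to_nat (- z i)) end).
  destruct (decode_prefix_surj (S (S N)) v) as [c Hc]; exists c.
  assert (Hc0 : decode c 0 = N) by (apply Hc; lia).
  assert (Hc1 : S (decode c 1) = K) by (rewrite Hc by lia; simpl; lia).
  split; [| intros i Hi; apply rat_seq_support; lia].
  intros i Hi; unfold rat_seq; rewrite Hc0, Hc1, (proj2 (Nat.ltb_lt i N) Hi), Hc by lia.
  unfold v; rewrite Cantor.cancel_of_to; cbn [fst snd]; rewrite INR_Z_to_nat_sub.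
  assert (HKpos : 0 < INR K) by (apply lt_0_INR; exact HK).
  destruct (archimed (x i * INR K)) as [A1 A2]; fold (z i) in A1, A2.
  replace (IZR (z i) / INR K - x i) with ((IZR (z i) - x i * INR K) * / INR K) by (field; lra).
  rewrite Rabs_mult, (Rabs_pos_eq (/ INR K)) by (left; apply Rinv_0_lt_compat, HKpos).
  rewrite <- (Rmult_1_l (/ INR K)) at 2; apply Rmult_le_compat_r; [left; apply Rinv_0_lt_compat, HKpos |].
  apply Rabs_le; lra.
Qed.

Section DenseSubset.
Variable q : R.
Hypothesis Hq : 1 < q.

Lemma rat_seq_bounded c : exists B, 0 <= B /\ forall n, lqn_norm q n (rat_seq c) <= B.
Proof.
  exists (lqn_norm q (decode c 0) (rat_seq c)); split; [apply lqn_norm_ge0 |]; intros n.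
  apply pw_le_compat; [apply Rdiv_lt_0_compat; lra | split; [apply sumR_pw_ge0 |]].
  destruct (Nat.le_gt_cases n (decode c 0)); [apply sumR_le_sumR; auto; intros; apply pw_ge0 |].
  replace n with (decode c 0 + (n - decode c 0))%nat by lia.
  induction (n - decode c 0)%nat as [| d IH]; [rewrite Nat.add_0_r; lra |].
  rewrite Nat.add_succ_r; cbn [sumR]; rewrite rat_seq_support, Rabs_R0, pw_0 by lia; lra.
Qed.

Lemma rat_seq_dense x delta : lq_mem q x -> 0 < delta ->
  exists c, forall n, lqn_norm q n (seq_sub (rat_seq c) x) < delta.
Proof.
  intros Hx Hd; set (T := pw (delta / 2) q); assert (HT : 0 < T) by (apply pw_gt0; lra).
  set (a := fun i => pw (Rabs (x i)) q).
  destruct (sumR_tail_le a (T / 2) ltac:(intros; apply pw_ge0) Hx ltac:(lra)) as [N HN].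
  assert (HN1 : 0 < INR N + 1) by (pose proof (pos_INR N); lra).
  set (e := T / (2 * (INR N + 1))); assert (He : 0 < e) by (apply Rdiv_lt_0_compat; lra).
  destruct (archimed_cor1 (pw e (1 / q)) ltac:(apply pw_gt0; exact He)) as [K [HK HK0]].
  destruct (rat_seq_approx x N K HK0) as [c [Hin Hout]]; exists c; intros n.
  set (w := fun i => pw (Rabs (seq_sub (rat_seq c) x i)) q).
  assert (Hw : forall i, (i < N)%nat -> w i <= e).
  { intros i Hi; unfold w, seq_sub, seq_add, seq_scal.
    rewrite <- (pw_inv_pw e q) by lra; apply pw_le_compat; [lra | split; [apply Rabs_pos |]].
    replace (rat_seq c i + -1 * x i) with (rat_seq c i - x i) by ring; specialize (Hin i Hi); lra. }
  assert (HwN : sumR N w <= T / 2).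
  { apply Rle_trans with (sumR N (fun _ => e)); [apply sumR_le_compat, Hw |].
    rewrite sumR_const; unfold e; apply Rmult_le_reg_r with (2 * (INR N + 1)); [lra |].
    replace (INR N * (T / (2 * (INR N + 1))) * (2 * (INR N + 1))) with (INR N * T) by (field; lra).
    pose proof (pos_INR N); nra. }
  assert (Hsum : sumR n w <= T).
  { destruct (Nat.le_gt_cases N n) as [HNn | HnN].
    - assert (Htail : forall m, (N <= m)%nat -> w m = a m).
      { intros m Hm; unfold w, a, seq_sub, seq_add, seq_scal; rewrite Hout by exact Hm.
        f_equal; rewrite <- Rabs_Ropp; f_equal; ring. }
      specialize (HN n HNn).
      assert (sumR n w - sumR N w = sumR n a - sumR N a)
        by (clear - HNn Htail; induction HNn; cbn [sumR]; [ring | rewrite Htail by lia; lra]).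
      lra.
    - pose proof (sumR_le_sumR n N w ltac:(intros; apply pw_ge0) ltac:(lia)); lra. }
  apply Rle_lt_trans with (pw T (1 / q)); [| unfold T; rewrite pw_pw_inv by lra; lra].
  apply pw_le_compat; [apply Rdiv_lt_0_compat; lra | split; [apply sumR_pw_ge0 | exact Hsum]].
Qed.

End DenseSubset.

Lemma nat_down_ind (P : nat -> Prop) (k : nat) :
  P k -> (forall j, (j < k)%nat -> P (S j) -> P j) -> forall j, (j <= k)%nat -> P j.
Proof.
  intros Hk Hstep j Hj; replace j with (k - (k - j))%nat by lia.
  induction (k - j)%nat as [| d IH]; [rewrite Nat.sub_0_r; exact Hk |].
  destruct (Nat.le_gt_cases k d); [replace (k - S d)%nat with (k - d)%nat by lia; exact IH |].
  apply Hstep; [lia | replace (S (k - S d)) with (k - d)%nat by lia; exact IH].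
Qed.

Lemma is_lim_seq_Rabs_le (u : nat -> R) (l B : R) :
  is_lim_seq u l -> (forall n, Rabs (u n) <= B) -> Rabs l <= B.
Proof.
  intros Hu HB; pose proof (is_lim_seq_le _ _ _ _ HB (is_lim_seq_abs u l Hu) (is_lim_seq_const B)).
  assumption.
Qed.

Lemma ex_finite_lim_seq_approx (u : nat -> R) :
  (forall eps, 0 < eps -> exists v, ex_finite_lim_seq v /\ forall n, Rabs (u n - v n) <= eps) ->
  ex_finite_lim_seq u.
Proof.
  intros Happrox; apply ex_lim_seq_cauchy_corr; intros eps.
  assert (He3 : 0 < eps / 3) by (destruct eps; simpl; lra).
  destruct (Happrox _ He3) as [v [Hv Huv]]; apply ex_lim_seq_cauchy_corr in Hv.
  destruct (Hv (mkposreal _ He3)) as [N HN]; exists N; intros n m Hn Hm.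
  specialize (HN n m Hn Hm); pose proof (Huv n) as Hun; pose proof (Huv m) as Hum; simpl in HN.
  apply Rabs_le_between in Hun; apply Rabs_le_between in Hum; apply Rabs_def2 in HN.
  apply Rabs_def1; lra.
Qed.

Lemma scons_supd0 {V} (h : V) hs w : supd (scons h hs) 0 w = scons w hs.
Proof. apply functional_extensionality; intros [|]; reflexivity. Qed.

Definition line (x : nat -> R) (t : R) (h : nat -> R) : nat -> R := seq_add x (seq_scal t h).

Ltac seq_ext := apply functional_extensionality; intros;
  unfold line, seq_sub, seq_add, seq_scal, seq0; ring.

Lemma line_seq0 t h : line seq0 t h = seq_scal t h.
Proof. seq_ext. Qed.

Lemma seq_add_seq0_l x : seq_add seq0 x = x.
Proof. seq_ext. Qed.

Lemma seq_sub_seq0 x : seq_sub x seq0 = x.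
Proof. seq_ext. Qed.

Lemma seq_add_sub x y : seq_add x (seq_sub y x) = y.
Proof. seq_ext. Qed.

Lemma seq_sub_line x t h : seq_sub (line x t h) x = seq_scal t h.
Proof. seq_ext. Qed.

Section UniformEstimates.
Variables (p q r : R) (F : (nat -> nat -> R) -> R) (k : nat)
  (D : nat -> (nat -> nat -> R) -> (nat -> nat -> nat -> R) -> R) (M : R).
Hypothesis Hp : 0 < p.
Hypothesis Hq : 1 < q.
Hypothesis Hk : INR k < r <= INR (S k).
Hypothesis HFD : frechet_derivatives (nat -> nat -> R) (X_mem p q) X_add X_scal (X_norm p q) k F D.
Hypothesis HM : 0 < M.
Hypothesis HH : forall y z hs, X_mem p q y -> X_mem p q z ->
  args_in (nat -> nat -> R) (X_mem p q) k hs ->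
  Rabs (D k y hs - D k z hs)
    <= M * pw (X_norm p q (X_add y (X_scal (-1) z))) (r - INR k) * prodR k (fun i => X_norm p q (hs i)).

Let alpha := r - INR k.
Let Halpha : 0 < alpha. Proof. unfold alpha; lra. Qed.

Definition Dn n j x hs := D j (in_pin n x) (fun i => in_pin n (hs i)).

Notation nu n x := (lqn_norm q n x).
Notation nuprod n j hs := (prodR j (fun i => lqn_norm q n (hs i))).

Lemma args_in_in_pin n j (hs : nat -> nat -> R) :
  args_in (nat -> nat -> R) (X_mem p q) j (fun i => in_pin n (hs i)).
Proof. intros i _; apply X_mem_in_pin. Qed.

Lemma prodR_X_norm_in_pin n j hs : prodR j (fun i => X_norm p q (in_pin n (hs i))) = nuprod n j hs.
Proof. apply prodR_ext; intros; apply X_norm_in_pin, Hp. Qed.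

Lemma nuprod_ge0 n j hs : 0 <= nuprod n j hs.
Proof. apply prodR_ge0; intros; apply lqn_norm_ge0. Qed.

Lemma Dn_0 n x hs : Dn n 0 x hs = F (in_pin n x).
Proof. apply (proj1 HFD), X_mem_in_pin. Qed.

Lemma Dn_bounded_multilinear n j x : (j <= k)%nat ->
  bounded_multilinear (nat -> nat -> R) (X_mem p q) X_add X_scal (X_norm p q) j (D j (in_pin n x)).
Proof. intros Hj; apply (proj1 (proj2 HFD)); [exact Hj | apply X_mem_in_pin]. Qed.

Lemma Dn_ext_args n j x hs hs' : (j <= k)%nat -> (forall i, (i < j)%nat -> hs i = hs' i) ->
  Dn n j x hs = Dn n j x hs'.
Proof. intros Hj Hh; apply (proj1 (Dn_bounded_multilinear n j x Hj)); intros i Hi; rewrite Hh; auto. Qed.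

Lemma in_pin_supd n (hs : nat -> nat -> R) i w :
  (fun m => in_pin n (supd hs i w m)) = supd (fun m => in_pin n (hs m)) i (in_pin n w).
Proof. apply functional_extensionality; intros m; unfold supd; destruct (Nat.eqb m i); reflexivity. Qed.

Lemma Dn_add n j x hs i u v : (j <= k)%nat -> (i < j)%nat ->
  Dn n j x (supd hs i (seq_add u v)) = Dn n j x (supd hs i u) + Dn n j x (supd hs i v).
Proof.
  intros Hj Hi; unfold Dn; rewrite !in_pin_supd, in_pin_add.
  apply (Dn_bounded_multilinear n j x Hj); auto; apply args_in_in_pin || apply X_mem_in_pin.
Qed.

Lemma Dn_scal n j x hs i a u : (j <= k)%nat -> (i < j)%nat ->
  Dn n j x (supd hs i (seq_scal a u)) = a * Dn n j x (supd hs i u).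
Proof.
  intros Hj Hi; unfold Dn; rewrite !in_pin_supd, in_pin_scal.
  apply (Dn_bounded_multilinear n j x Hj); auto; apply args_in_in_pin || apply X_mem_in_pin.
Qed.

Lemma Dn_scons_scal n j x h hs s : (S j <= k)%nat ->
  Dn n (S j) x (scons (seq_scal s h) hs) = s * Dn n (S j) x (scons h hs).
Proof.
  intros Hj; rewrite <- (scons_supd0 h hs (seq_scal s h)).
  replace (scons h hs) with (supd (scons h hs) 0 h) at 2 by apply scons_supd0.
  apply Dn_scal; [exact Hj | lia].
Qed.

Lemma Dn_seq0_bounded j : (j <= k)%nat ->
  exists C, 0 <= C /\ forall n hs, Rabs (Dn n j seq0 hs) <= C * nuprod n j hs.
Proof.
  intros Hj; destruct (Dn_bounded_multilinear 0 j seq0 Hj) as [_ [_ [_ [C HC]]]].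
  exists (Rmax C 0); split; [apply Rmax_r |]; intros n hs; unfold Dn.
  replace (in_pin n seq0) with (in_pin 0 seq0) by (rewrite !in_pin_seq0; reflexivity).
  eapply Rle_trans; [apply HC, args_in_in_pin |]; cbv beta; rewrite prodR_X_norm_in_pin.
  apply Rmult_le_compat_r; [apply nuprod_ge0 | apply Rmax_l].
Qed.

Lemma Dn_frechet n j x : (j < k)%nat -> forall eps, 0 < eps -> exists delta, 0 < delta /\
  forall h, nu n h < delta -> forall hs,
  Rabs (Dn n j (seq_add x h) hs - Dn n j x hs - Dn n (S j) x (scons h hs)) <= eps * nu n h * nuprod n j hs.
Proof.
  intros Hj eps He.
  destruct (proj2 (proj2 HFD) j (in_pin n x) Hj (X_mem_in_pin p q n x) eps He) as [d [Hd Hfr]].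
  exists d; split; [exact Hd |]; intros h Hh hs; unfold Dn; rewrite in_pin_add.
  replace (fun m => in_pin n (scons h hs m)) with (scons (in_pin n h) (fun m => in_pin n (hs m)))
    by (apply functional_extensionality; intros [|]; reflexivity).
  rewrite <- X_norm_in_pin with (p := p), <- prodR_X_norm_in_pin by exact Hp.
  apply Hfr; [apply X_mem_in_pin | rewrite X_norm_in_pin; assumption | apply args_in_in_pin].
Qed.

Lemma Dn_holder n y z hs :
  Rabs (Dn n k y hs - Dn n k z hs) <= M * pw (nu n (seq_sub y z)) alpha * nuprod n k hs.
Proof.
  unfold Dn; rewrite <- X_norm_in_pin with (p := p), <- prodR_X_norm_in_pin by exact Hp.
  unfold seq_sub; rewrite in_pin_add, in_pin_scal.
  apply HH; [apply X_mem_in_pin | apply X_mem_in_pin | apply args_in_in_pin].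
Qed.

Lemma Dn_line_derivative n j x h hs t : (j < k)%nat ->
  derivable_pt_lim (fun t => Dn n j (line x t h) hs) t (Dn n (S j) (line x t h) (scons h hs)).
Proof.
  intros Hj eps Heps; set (y := line x t h); set (L := nu n h); set (P := nuprod n j hs).
  assert (HL : 0 <= L) by apply lqn_norm_ge0; assert (HP : 0 <= P) by apply nuprod_ge0.
  set (e := eps / (2 * (L * P + 1))); assert (He : 0 < e) by (apply Rdiv_lt_0_compat; nra).
  destruct (Dn_frechet n j y Hj e He) as [d [Hd Hfr]].
  assert (Hd' : 0 < d / (L + 1)) by (apply Rdiv_lt_0_compat; lra).
  exists (mkposreal _ Hd'); intros s Hs0 Hs; simpl in Hs.
  replace (line x (t + s) h) with (seq_add y (seq_scal s h))
    by (unfold y, line, seq_add, seq_scal; apply functional_extensionality; intros; ring).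
  assert (Hns : nu n (seq_scal s h) < d).
  { pose proof (Rabs_pos s); unfold Rdiv in Hs.
    rewrite lqn_norm_scal by exact Hq; fold L; apply Rle_lt_trans with (Rabs s * (L + 1)); [nra |].
    apply Rmult_lt_reg_r with (/ (L + 1)); [apply Rinv_0_lt_compat; lra |].
    rewrite Rmult_assoc, Rinv_r by lra; lra. }
  specialize (Hfr _ Hns hs); rewrite Dn_scons_scal, lqn_norm_scal in Hfr by (exact Hq || lia).
  fold L P in Hfr.
  assert (Hs' : 0 < Rabs s) by (apply Rabs_pos_lt, Hs0).
  set (A := Dn n j (seq_add y (seq_scal s h)) hs) in *; set (B := Dn n j y hs) in *.
  set (C := Dn n (S j) y (scons h hs)) in *.
  replace ((A - B) / s - C) with ((A - B - s * C) / s) by (field; exact Hs0).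
  unfold Rdiv; rewrite Rabs_mult, Rabs_inv.
  apply Rle_lt_trans with (e * L * P).
  - apply Rmult_le_reg_r with (Rabs s); [exact Hs' |]; rewrite Rmult_assoc, Rinv_l by lra; nra.
  - assert (L * P / (L * P + 1) <= 1)
      by (apply Rmult_le_reg_r with (L * P + 1); [nra |]; unfold Rdiv; rewrite Rmult_assoc, Rinv_l; nra).
    replace (e * L * P) with (eps / 2 * (L * P / (L * P + 1))) by (unfold e; field; nra); nra.
Qed.

(* The mean value theorem along the segment [[x, x + h]]; [c] is an arbitrary
   linear correction. *)
Lemma Dn_increment_le n j x h hs c B : (j < k)%nat ->
  (forall t, 0 <= t <= 1 -> Rabs (Dn n (S j) (line x t h) (scons h hs) - c) <= B) ->
  Rabs (Dn n j (seq_add x h) hs - Dn n j x hs - c) <= B.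
Proof.
  intros Hj HB.
  destruct (MVT_cor2 (fun t => Dn n j (line x t h) hs - t * c)
                     (fun t => Dn n (S j) (line x t h) (scons h hs) - c) 0 1) as [t [Ht Htb]].
  { lra. }
  { intros t _; apply derivable_pt_lim_minus; [apply Dn_line_derivative, Hj |].
    pose proof (derivable_pt_lim_scal_right _ t _ c (derivable_pt_lim_id t)) as Hlin.
    rewrite Rmult_1_l in Hlin; exact Hlin. }
  replace (line x 1 h) with (seq_add x h) in Ht
    by (unfold line, seq_add, seq_scal; apply functional_extensionality; intros; ring).
  replace (line x 0 h) with x in Ht
    by (unfold line, seq_add, seq_scal; apply functional_extensionality; intros; ring).
  replace (Dn n j (seq_add x h) hs - Dn n j x hs - c)
    with (Dn n j (seq_add x h) hs - 1 * c - (Dn n j x hs - 0 * c)) by ring.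
  rewrite Ht, Rminus_0_r, Rmult_1_r; apply HB; lra.
Qed.

Lemma Dn_bounded j : (j <= k)%nat -> forall R, 0 <= R ->
  exists C, 0 <= C /\ forall n x hs, nu n x <= R -> Rabs (Dn n j x hs) <= C * nuprod n j hs.
Proof.
  intros Hj R HR; revert j Hj; apply nat_down_ind.
  - destruct (Dn_seq0_bounded k (Nat.le_refl k)) as [C0 [HC0 H0]].
    exists (C0 + M * pw R alpha); split; [pose proof (pw_ge0 R alpha); nra |].
    intros n x hs Hx; pose proof (Dn_holder n x seq0 hs) as Hhol; rewrite seq_sub_seq0 in Hhol.
    specialize (H0 n hs); pose proof (nuprod_ge0 n k hs).
    assert (pw (nu n x) alpha <= pw R alpha)
      by (apply pw_le_compat; [exact Halpha | split; [apply lqn_norm_ge0 | exact Hx]]).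
    assert (M * pw (nu n x) alpha * nuprod n k hs <= M * pw R alpha * nuprod n k hs)
      by (apply Rmult_le_compat_r; [assumption | apply Rmult_le_compat_l; lra]).
    pose proof (Rabs_triang_inv (Dn n k x hs) (Dn n k seq0 hs)); nra.
  - intros j Hjk [C1 [HC1 H1]]; destruct (Dn_seq0_bounded j ltac:(lia)) as [C0 [HC0 H0]].
    exists (C0 + C1 * R); split; [nra |]; intros n x hs Hx.
    assert (Hinc : Rabs (Dn n j (seq_add seq0 x) hs - Dn n j seq0 hs - 0) <= C1 * R * nuprod n j hs).
    { apply Dn_increment_le; [exact Hjk |]; intros t Ht; rewrite Rminus_0_r.
      pose proof (lqn_norm_ge0 q n x); pose proof (nuprod_ge0 n j hs).
      eapply Rle_trans; [apply H1 |].
      - rewrite line_seq0, lqn_norm_scal, Rabs_pos_eq by lra; nra.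
      - rewrite (prodR_scons (fun v => nu n v)).
        replace (C1 * R * nuprod n j hs) with (C1 * (R * nuprod n j hs)) by ring.
        apply Rmult_le_compat_l; [exact HC1 | apply Rmult_le_compat_r; assumption]. }
    rewrite seq_add_seq0_l, Rminus_0_r in Hinc; specialize (H0 n hs); pose proof (nuprod_ge0 n j hs).
    pose proof (Rabs_triang_inv (Dn n j x hs) (Dn n j seq0 hs)); nra.
Qed.

Lemma Dn_equicontinuous j : (j <= k)%nat -> forall R, 0 <= R -> forall eps, 0 < eps ->
  exists delta, 0 < delta /\ forall n x y hs, nu n x <= R -> nu n (seq_sub y x) < delta ->
  Rabs (Dn n j y hs - Dn n j x hs) <= eps * nuprod n j hs.
Proof.
  intros Hj R HR eps He; destruct (Nat.eq_dec j k) as [-> | Hjk].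
  - exists (pw (eps / M) (1 / alpha)); split; [apply pw_gt0, Rdiv_lt_0_compat; lra |].
    intros n x y hs _ Hy; eapply Rle_trans; [apply Dn_holder |].
    apply Rmult_le_compat_r; [apply nuprod_ge0 |].
    assert (pw (nu n (seq_sub y x)) alpha <= eps / M).
    { rewrite <- (pw_inv_pw (eps / M) alpha) by (try apply Rlt_le, Rdiv_lt_0_compat; lra).
      apply pw_le_compat; [exact Halpha | split; [apply lqn_norm_ge0 | lra]]. }
    apply Rle_trans with (M * (eps / M)); [apply Rmult_le_compat_l; lra | right; field; lra].
  - destruct (Dn_bounded (S j) ltac:(lia) (2 * (R + 1)) ltac:(lra)) as [C1 [HC1 H1]].
    exists (Rmin 1 (eps / (C1 + 1))); split; [apply Rmin_pos; [lra | apply Rdiv_lt_0_compat; lra] |].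
    intros n x y hs Hx Hy; set (z := seq_sub y x) in *.
    pose proof (Rmin_l 1 (eps / (C1 + 1))); pose proof (Rmin_r 1 (eps / (C1 + 1))).
    assert (HC1z : C1 * nu n z <= eps).
    { apply Rle_trans with (C1 * (eps / (C1 + 1))); [apply Rmult_le_compat_l; lra |].
      apply Rmult_le_reg_r with (C1 + 1); [lra |].
      replace (C1 * (eps / (C1 + 1)) * (C1 + 1)) with (C1 * eps) by (field; lra); nra. }
    rewrite <- (seq_add_sub x y), <- (Rminus_0_r (_ - _)); fold z.
    apply Dn_increment_le; [lia |]; intros t Ht; rewrite Rminus_0_r.
    pose proof (lqn_norm_ge0 q n z); pose proof (nuprod_ge0 n j hs).
    eapply Rle_trans; [apply H1 |].
    + unfold line; eapply Rle_trans; [apply lqn_norm_add_le, Hq |].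
      rewrite lqn_norm_scal, Rabs_pos_eq by lra; nra.
    + rewrite (prodR_scons (fun v => nu n v)), <- Rmult_assoc.
      apply Rmult_le_compat_r; assumption.
Qed.

Lemma Dn_frechet_uniform j : (j < k)%nat -> forall R, 0 <= R -> forall eps, 0 < eps ->
  exists delta, 0 < delta /\ forall n x h hs, nu n x <= R -> nu n h < delta ->
  Rabs (Dn n j (seq_add x h) hs - Dn n j x hs - Dn n (S j) x (scons h hs)) <= eps * nu n h * nuprod n j hs.
Proof.
  intros Hj R HR eps He; destruct (Dn_equicontinuous (S j) Hj R HR eps He) as [d [Hd Hcont]].
  exists d; split; [exact Hd |]; intros n x h hs Hx Hh.
  apply Dn_increment_le; [exact Hj |]; intros t Ht.
  eapply Rle_trans; [apply Hcont; [exact Hx |] |].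
  - rewrite seq_sub_line, lqn_norm_scal, Rabs_pos_eq by lra; pose proof (lqn_norm_ge0 q n h); nra.
  - rewrite (prodR_scons (fun v => nu n v)); right; ring.
Qed.

Lemma Dn_difference_quotient j R L P eps : (j < k)%nat -> 0 <= R -> 0 <= L -> 0 <= P -> 0 < eps ->
  exists s, 0 < s /\ forall n x h hs, nu n x <= R -> nu n h <= L -> nuprod n j hs <= P ->
  Rabs (Dn n (S j) x (scons h hs) - (Dn n j (line x s h) hs - Dn n j x hs) / s) <= eps.
Proof.
  intros Hj HR HL HP He; set (e := eps / (L * P + 1)); assert (He' : 0 < e) by (apply Rdiv_lt_0_compat; nra).
  destruct (Dn_frechet_uniform j Hj R HR e He') as [d [Hd Hfr]].
  exists (d / (2 * (L + 1))); split; [apply Rdiv_lt_0_compat; lra |]; set (s := d / (2 * (L + 1))).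
  assert (HsL : s * L < d) by (unfold s; apply Rmult_lt_reg_r with (2 * (L + 1)); [lra |];
    replace (d / (2 * (L + 1)) * L * (2 * (L + 1))) with (d * L) by (field; lra); nra).
  assert (Hs : 0 < s) by (apply Rdiv_lt_0_compat; lra).
  intros n x h hs Hx Hh HPP.
  assert (Hnu : nu n (seq_scal s h) <= s * L)
    by (rewrite lqn_norm_scal, Rabs_pos_eq by lra; apply Rmult_le_compat_l; lra).
  specialize (Hfr n x (seq_scal s h) hs Hx ltac:(lra)); rewrite Dn_scons_scal in Hfr by lia.
  fold (line x s h) in Hfr.
  set (A := Dn n j (line x s h) hs) in *; set (B := Dn n j x hs) in *.
  set (C := Dn n (S j) x (scons h hs)) in *.
  replace (C - (A - B) / s) with (- (A - B - s * C) / s) by (field; lra).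
  unfold Rdiv; rewrite Rabs_mult, Rabs_Ropp, Rabs_inv, (Rabs_pos_eq s) by lra.
  apply Rmult_le_reg_r with s; [exact Hs |]; rewrite Rmult_assoc, Rinv_l, Rmult_1_r by lra.
  eapply Rle_trans; [exact Hfr |].
  assert (e * nu n (seq_scal s h) * nuprod n j hs <= e * (s * L) * P).
  { apply Rmult_le_compat; [pose proof (lqn_norm_ge0 q n (seq_scal s h)); nra | apply nuprod_ge0
      | apply Rmult_le_compat_l; lra | exact HPP]. }
  assert (L * P / (L * P + 1) <= 1)
    by (apply Rmult_le_reg_r with (L * P + 1); [nra |]; unfold Rdiv; rewrite Rmult_assoc, Rinv_l; nra).
  replace (e * (s * L) * P) with (eps * s * (L * P / (L * P + 1))) in * by (unfold e; field; nra).
  assert (0 <= eps * s) by nra; nra.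
Qed.

Lemma Dn_rat_seq_bounded c : exists B, forall n, Rabs (Dn n 0 (rat_seq c) (fun _ => seq0)) <= B.
Proof.
  destruct (rat_seq_bounded q Hq c) as [R [HR HRb]].
  destruct (Dn_bounded 0 ltac:(lia) R HR) as [C [_ HCb]]; exists C; intros n.
  pose proof (HCb n (rat_seq c) (fun _ => seq0) (HRb n)) as Hn; simpl in Hn; lra.
Qed.

Lemma exists_subseq_converging_on_rat_seq : exists phi, strict_incr phi /\ (forall j, (0 < phi j)%nat) /\
  forall c, ex_finite_lim_seq (fun j => Dn (phi j) 0 (rat_seq c) (fun _ => seq0)).
Proof.
  destruct (diagonal_convergent_subseq (fun c n => Dn n 0 (rat_seq c) (fun _ => seq0))
              Dn_rat_seq_bounded) as [phi [Hinc Hlim]].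
  exists (fun j => phi (S j)); split; [| split].
  - intros j; apply Hinc.
  - intros j; pose proof (strict_incr_ge_id _ Hinc (S j)); lia.
  - intros c; destruct (Hlim c) as [l Hl]; exists l.
    apply (is_lim_seq_incr_1 (fun j => Dn (phi j) 0 (rat_seq c) (fun _ => seq0))), Hl.
Qed.

Lemma nuprod_le j n hs : args_in (nat -> R) (lq_mem q) j hs ->
  nuprod n j hs <= prodR j (fun i => lq_norm q (hs i)).
Proof.
  intros H; apply prodR_le_compat; intros i Hi.
  split; [apply lqn_norm_ge0 | apply lqn_norm_le_lq_norm; auto].
Qed.

Section Limit.
Variable phi : nat -> nat.
Hypothesis Hphi : forall c, ex_finite_lim_seq (fun j => Dn (phi j) 0 (rat_seq c) (fun _ => seq0)).

Lemma Dn_phi_converges_0 x hs : lq_mem q x -> ex_finite_lim_seq (fun m => Dn (phi m) 0 x hs).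
Proof.
  intros Hx; apply ex_finite_lim_seq_approx; intros eps He.
  destruct (Dn_equicontinuous 0 ltac:(lia) (lq_norm q x) (lq_norm_ge0 q x) eps He) as [d [Hd Hcont]].
  destruct (rat_seq_dense q Hq x d Hx Hd) as [c Hc].
  exists (fun m => Dn (phi m) 0 (rat_seq c) (fun _ => seq0)); split; [apply Hphi |]; intros m.
  rewrite (Dn_ext_args _ 0 _ (fun _ => seq0) hs), Rabs_minus_sym by (lia || intros; lia).
  specialize (Hcont (phi m) x (rat_seq c) hs (lqn_norm_le_lq_norm q Hq _ x Hx) (Hc (phi m))).
  simpl in Hcont; lra.
Qed.

Lemma Dn_phi_converges j : (j <= k)%nat -> forall x hs, lq_mem q x -> args_in (nat -> R) (lq_mem q) j hs ->
  ex_finite_lim_seq (fun m => Dn (phi m) j x hs).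
Proof.
  induction j as [| j IH]; intros Hj x hs Hx Hhs; [apply Dn_phi_converges_0, Hx |].
  set (h := hs O); set (tl := fun i => hs (S i)).
  assert (Hh : lq_mem q h) by (apply Hhs; lia).
  assert (Htl : args_in (nat -> R) (lq_mem q) j tl) by (intros i Hi; apply Hhs; lia).
  apply ex_finite_lim_seq_approx; intros eps He.
  assert (HP : 0 <= prodR j (fun i => lq_norm q (tl i))) by (apply prodR_ge0; intros; apply lq_norm_ge0).
  destruct (Dn_difference_quotient j _ _ _ eps ltac:(lia) (lq_norm_ge0 q x) (lq_norm_ge0 q h) HP He)
    as [s [Hs Hdq]].
  destruct (IH ltac:(lia) (line x s h) tl ltac:(apply lq_mem_add, lq_mem_scal; assumption) Htl) as [l1 Hl1].
  destruct (IH ltac:(lia) x tl Hx Htl) as [l2 Hl2].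
  exists (fun m => (Dn (phi m) j (line x s h) tl - Dn (phi m) j x tl) / s); split.
  - exists ((l1 - l2) / s); apply (is_lim_seq_scal_r _ (/ s) (l1 - l2)), is_lim_seq_minus'; assumption.
  - intros m; rewrite (Dn_ext_args _ (S j) x hs (scons h tl)) by (exact Hj || intros [|] _; reflexivity).
    apply Hdq; [apply lqn_norm_le_lq_norm; auto | apply lqn_norm_le_lq_norm; auto | apply nuprod_le, Htl].
Qed.

Definition Dstar (j : nat) (x : nat -> R) (hs : nat -> nat -> R) : R :=
  real (Lim_seq (fun m => Dn (phi m) j x hs)).

Lemma Dstar_limit j x hs : (j <= k)%nat -> lq_mem q x -> args_in (nat -> R) (lq_mem q) j hs ->
  is_lim_seq (fun m => Dn (phi m) j x hs) (Dstar j x hs).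
Proof. intros; apply Lim_seq_correct', Dn_phi_converges; assumption. Qed.

Lemma Dstar_bounded_multilinear j x : (j <= k)%nat -> lq_mem q x ->
  bounded_multilinear (nat -> R) (lq_mem q) seq_add seq_scal (lq_norm q) j (Dstar j x).
Proof.
  intros Hj Hx; split; [| split; [| split]].
  - intros hs hs' Hh; unfold Dstar; f_equal; apply Lim_seq_ext; intros; apply Dn_ext_args; assumption.
  - intros hs i u v Hhs Hi Hu Hv.
    assert (Hsupd : forall w, lq_mem q w -> args_in (nat -> R) (lq_mem q) j (supd hs i w))
      by (intros w Hw i' Hi'; unfold supd; destruct (Nat.eqb i' i); auto).
    unfold Dstar at 1; rewrite (is_lim_seq_unique _ (Dstar j x (supd hs i u) + Dstar j x (supd hs i v)));
      [reflexivity |].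
    eapply is_lim_seq_ext; [| apply is_lim_seq_plus'; apply Dstar_limit; auto].
    intros m; simpl; rewrite Dn_add; auto.
  - intros hs i a u Hhs Hi Hu.
    assert (Hsupd : args_in (nat -> R) (lq_mem q) j (supd hs i u))
      by (intros i' Hi'; unfold supd; destruct (Nat.eqb i' i); auto).
    unfold Dstar at 1; rewrite (is_lim_seq_unique _ (a * Dstar j x (supd hs i u))); [reflexivity |].
    eapply is_lim_seq_ext;
      [| apply (is_lim_seq_scal_l (fun m => Dn (phi m) j x (supd hs i u)) a (Dstar j x (supd hs i u)));
         apply Dstar_limit; auto].
    intros m; simpl; rewrite Dn_scal; auto.
  - destruct (Dn_bounded j Hj (lq_norm q x) (lq_norm_ge0 q x)) as [C [HC HCb]].
    exists C; intros hs Hhs; apply (is_lim_seq_Rabs_le _ _ _ (Dstar_limit j x hs Hj Hx Hhs)).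
    intros m; eapply Rle_trans; [apply HCb, lqn_norm_le_lq_norm; auto |].
    apply Rmult_le_compat_l; [exact HC | apply nuprod_le, Hhs].
Qed.

Lemma Dstar_frechet j x : (j < k)%nat -> lq_mem q x -> forall eps, 0 < eps ->
  exists delta, 0 < delta /\ forall h, lq_mem q h -> lq_norm q h < delta ->
  forall hs, args_in (nat -> R) (lq_mem q) j hs ->
  Rabs (Dstar j (seq_add x h) hs - Dstar j x hs - Dstar (S j) x (scons h hs))
    <= eps * lq_norm q h * prodR j (fun i => lq_norm q (hs i)).
Proof.
  intros Hj Hx eps He.
  destruct (Dn_frechet_uniform j Hj (lq_norm q x) (lq_norm_ge0 q x) eps He) as [d [Hd Hfr]].
  exists d; split; [exact Hd |]; intros h Hh Hhd hs Hhs.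
  assert (Hscons : args_in (nat -> R) (lq_mem q) (S j) (scons h hs))
    by (intros [| i] Hi; [exact Hh | apply Hhs; lia]).
  apply (is_lim_seq_Rabs_le (fun m => Dn (phi m) j (seq_add x h) hs - Dn (phi m) j x hs
                                       - Dn (phi m) (S j) x (scons h hs))).
  { apply is_lim_seq_minus'; [apply is_lim_seq_minus' |]; apply Dstar_limit;
      auto using lq_mem_add; lia. }
  intros m; pose proof (lqn_norm_le_lq_norm q Hq (phi m) h Hh).
  eapply Rle_trans; [apply Hfr; [apply lqn_norm_le_lq_norm; auto | lra] |].
  apply Rmult_le_compat; [apply Rmult_le_pos; [lra | apply lqn_norm_ge0] | apply nuprod_ge0
    | apply Rmult_le_compat_l; lra | apply nuprod_le, Hhs].
Qed.

Lemma Dstar_holder y z hs : lq_mem q y -> lq_mem q z -> args_in (nat -> R) (lq_mem q) k hs ->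
  Rabs (Dstar k y hs - Dstar k z hs)
    <= M * pw (lq_norm q (seq_sub y z)) alpha * prodR k (fun i => lq_norm q (hs i)).
Proof.
  intros Hy Hz Hhs.
  apply (is_lim_seq_Rabs_le (fun m => Dn (phi m) k y hs - Dn (phi m) k z hs));
    [apply is_lim_seq_minus'; apply Dstar_limit; auto |].
  intros m; eapply Rle_trans; [apply Dn_holder |].
  apply Rmult_le_compat;
    [apply Rmult_le_pos; [lra | apply pw_ge0] | apply nuprod_ge0 | | apply nuprod_le, Hhs].
  apply Rmult_le_compat_l; [lra |]; apply pw_le_compat; [exact Halpha |].
  split; [apply lqn_norm_ge0 | apply lqn_norm_le_lq_norm, lq_mem_sub; assumption].
Qed.

Lemma Fstar_smooth : smooth_lq q r (fun x => Dstar 0 x (fun _ => seq0)).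
Proof.
  exists k, Dstar, M; split; [exact Hk | split; [split; [| split] | split; [exact HM |]]].
  - intros x hs Hx; unfold Dstar; f_equal; apply Lim_seq_ext; intros m.
    apply Dn_ext_args; [lia | intros; lia].
  - intros j x Hj Hx; apply Dstar_bounded_multilinear; assumption.
  - intros j x Hj Hx; apply Dstar_frechet; assumption.
  - exact Dstar_holder.
Qed.

Lemma F_phi_converges x : lq_mem q x ->
  is_lim_seq (fun j => F (in_pin (phi j) x)) (Dstar 0 x (fun _ => seq0)).
Proof.
  intros Hx; eapply is_lim_seq_ext; [| apply Dstar_limit; auto; [lia | intros i Hi; lia]].
  intros m; apply Dn_0.
Qed.

End Limit.

Lemma convergent_smooth_subsequence : exists (phi : nat -> nat) (Fstar : (nat -> R) -> R),
  (forall j, (0 < phi j)%nat) /\ strict_incr phi /\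
  (forall x, lq_mem q x -> is_lim_seq (fun j => F (in_pin (phi j) x)) (Fstar x)) /\
  smooth_lq q r Fstar.
Proof.
  destruct exists_subseq_converging_on_rat_seq as [phi [Hinc [Hpos Hc]]].
  exists phi, (fun x => Dstar phi 0 x (fun _ => seq0)).
  split; [exact Hpos | split; [exact Hinc | split; [apply F_phi_converges, Hc | apply Fstar_smooth, Hc]]].
Qed.

End UniformEstimates.

Theorem proposition3p4 (p q r : R) (F : (nat -> nat -> R) -> R) :
  1 < p -> 1 < q -> 1 < r ->
  smooth_X p q r F ->
  exists (phi : nat -> nat) (Fstar : (nat -> R) -> R),
    (forall j, (0 < phi j)%nat) /\
    (forall j, (phi j < phi (S j))%nat) /\
    (forall x, lq_mem q x ->
       is_lim_seq (fun j => F (in_pin (phi j) x)) (Fstar x)) /\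
    smooth_lq q r Fstar.
Proof.
  intros Hp Hq _ [k [D [M [Hk [HFD [HM HH]]]]]].
  exact (convergent_smooth_subsequence p q r F k D M ltac:(lra) Hq Hk HFD HM HH).
Qed.
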